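(* Let $F$ be a smooth distribution supported on $[0,1]$ whose CDF is convex (equivalently, whose PDF $f$ is non-decreasing). Then $\tilde{O}(\epsilon^{-1/2})$ oracle queries to $F$ and $f$ suffice to learn $F$ within Lévy distance $O(\epsilon)$.
   Context: A distribution is smooth if it has no point masses and a PDF $f$ of class $C^1$. Oracle query model: an algorithm adaptively chooses points $x$ and receives the exact values $F(x)$ and/or $f(x)$; after its queries it must output a distribution $\hat F$ with $\mathrm{L\acute{e}vy}(F,\hat F)$ at most the target accuracy, where $\mathrm{L\acute{e}vy}(F,G)=\inf\{\epsilon: F(v-\epsilon)-\epsilon\le G(v)\le F(v+\epsilon)+\epsilon\ \forall v\}$. $\tilde{O}$ hides polylog$(1/\epsilon)$ factors. *)

From Stdlib Require Import Reals Lra List.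
From Coquelicot Require Import Coquelicot.
Open Scope R_scope.

Definition is_cdf (G : R -> R) : Prop :=
  (forall x y, x <= y -> G x <= G y) /\
  (forall x, filterlim G (at_right x) (locally (G x))) /\
  is_lim G m_infty 0 /\ is_lim G p_infty 1.

Definition levy (F G : R -> R) : Rbar :=
  Glb_Rbar (fun e => forall v, F (v - e) - e <= G v /\ G v <= F (v + e) + e).

(* F is a smooth distribution supported on [0,1] with PDF f:
   no point masses (F(x) = int_0^x f for x in [0,1], 0 before, 1 after),
   f >= 0, f = 0 outside [0,1], and f is C^1 on [0,1]
   (it agrees on [0,1] with a C^1 function on R). *)
Definition smooth_dist01 (F f : R -> R) : Prop :=
  (forall x, 0 <= f x) /\
  (forall x, (x < 0 \/ 1 < x) -> f x = 0) /\
  (forall x, x <= 0 -> F x = 0) /\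
  (forall x, 1 <= x -> F x = 1) /\
  (forall x, 0 <= x <= 1 -> ex_RInt f 0 x /\ F x = RInt f 0 x) /\
  (exists g : R -> R,
      (forall x, ex_derive g x) /\ (forall x, continuous (Derive g) x) /\
      (forall x, 0 <= x <= 1 -> f x = g x)).

Definition convex_on01 (F : R -> R) : Prop :=
  forall x y t, 0 <= x <= 1 -> 0 <= y <= 1 -> 0 <= t <= 1 ->
    F (t * x + (1 - t) * y) <= t * F x + (1 - t) * F y.

(* Deterministic adaptive oracle-query algorithm: a history is the list of
   (query point, (F value, f value)); [next] picks the next query point from
   the history, [output] returns the learned CDF from the full transcript. *)
Definition history := list (R * (R * R)).
Record algorithm := { next : history -> R ; output : history -> (R -> R) }.

Fixpoint transcript (A : algorithm) (F f : R -> R) (n : nat) : history :=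
  match n with
  | O => nil
  | S m => let h := transcript A F f m in
           let x := next A h in h ++ ((x, (F x, f x)) :: nil)
  end.

Definition learns_with (A : algorithm) (n : nat) (delta : R) : Prop :=
  forall F f, smooth_dist01 F f -> convex_on01 F ->
    let Fh := output A (transcript A F f n) in
    is_cdf Fh /\ Rbar_le (levy F Fh) (Finite delta).

From Stdlib Require Import Reals Lra Lia List ZArith.
From Coquelicot Require Import Coquelicot.
Open Scope R_scope.

(* Analytic part: a convex CDF with continuous density f lies above each of
   its tangent lines, so F is non-decreasing and f is non-decreasing on [0,1].

   Algorithm: with h = 1/M, M ~ eps^{-1/2}, the learner locates by L-step
   bisection (L ~ 2 log(1/eps)) the points where the non-decreasing
   potentials x + F x and f x / (1 + f x) cross the levels h, 2h, ...; it
   outputs the piecewise-linear interpolation of all sampled values of F,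
   which is always a CDF.  This costs 3 M L queries.

   Error analysis: the interpolant lies above F by convexity.  Between two
   neighbouring nodes a < b with b - a > eps no level is crossed, so both
   potentials increase by at most h on [a, b]; combining the two tangent
   lines at a and b then shows the interpolant at v is below F (v + eps) + eps
   because h^2 <= eps.  Hence the Levy distance is at most eps. *)

Lemma convex_chord (F : R -> R) : convex_on01 F -> forall x y z,
  0 <= x -> x <= y -> y <= z -> z <= 1 -> x < z ->
  F y * (z - x) <= (z - y) * F x + (y - x) * F z.
Proof.
  intros Hc x y z H0 H1 H2 H3 H4.
  set (t := (z - y) / (z - x)).
  assert (Ht0 : 0 <= t) by (unfold t; apply Rmult_le_pos; [lra | left; apply Rinv_0_lt_compat; lra]).
  assert (Ht1 : t <= 1).
  { unfold t. apply (Rmult_le_reg_r (z - x)); [lra |]. field_simplify; lra. }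
  assert (Hy : t * x + (1 - t) * z = y) by (unfold t; field; lra).
  pose proof (Hc x z t ltac:(lra) ltac:(lra) ltac:(lra)) as H.
  rewrite Hy in H.
  assert (E : (t * F x + (1 - t) * F z) * (z - x) = (z - y) * F x + (y - x) * F z)
    by (unfold t; field; lra).
  rewrite <- E. apply Rmult_le_compat_r; lra.
Qed.

Lemma pdf_continuous (F f : R -> R) : smooth_dist01 F f -> forall a, 0 <= a <= 1 ->
  forall d, 0 < d -> exists r, 0 < r /\
    forall x, 0 <= x <= 1 -> Rabs (x - a) < r -> Rabs (f x - f a) < d.
Proof.
  intros (_ & _ & _ & _ & _ & g & Hg & _ & Hfg) a Ha d Hd.
  pose proof (proj1 (filterlim_locally (F := locally a) g (g a))
                (ex_derive_continuous g a (Hg a))) as Hc.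
  destruct (Hc (mkposreal d Hd)) as [r Hr].
  exists r. split; [apply cond_pos |].
  intros x Hx Hxa. rewrite !Hfg by auto. apply Hr. exact Hxa.
Qed.

Lemma cdf_increment (F f : R -> R) : smooth_dist01 F f ->
  forall x y, 0 <= x -> x <= y -> y <= 1 -> ex_RInt f x y /\ F y - F x = RInt f x y.
Proof.
  intros (_ & _ & _ & _ & HI & _) x y H0 H1 H2.
  destruct (HI x ltac:(lra)) as [Ix Fx]. destruct (HI y ltac:(lra)) as [Iy Fy].
  assert (Ixy : ex_RInt f x y) by (apply (ex_RInt_Chasles_2 f 0 x y); [lra | exact Iy]).
  split; [exact Ixy |].
  rewrite Fx, Fy, <- (RInt_Chasles f 0 x y Ix Ixy). unfold plus; simpl. ring.
Qed.

Lemma RInt_const_bounds (g : R -> R) x y c d : x <= y -> ex_RInt g x y ->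
  (forall z, x < z < y -> c <= g z <= d) ->
  c * (y - x) <= RInt g x y <= d * (y - x).
Proof.
  intros Hxy Hg Hb.
  assert (E : forall k, RInt (fun _ => k) x y = k * (y - x)).
  { intros k. rewrite RInt_const. unfold scal; simpl. unfold mult; simpl. ring. }
  rewrite <- !E. split; apply RInt_le; auto using ex_RInt_const; intros z Hz; apply Hb, Hz.
Qed.

Lemma cdf_local_slope (F f : R -> R) : smooth_dist01 F f -> forall a d c,
  0 <= a <= 1 -> 0 < d -> 0 < c -> exists t, 0 < t <= c /\
    (a + t <= 1 -> (f a - d) * t <= F (a + t) - F a) /\
    (0 <= a - t -> F a - F (a - t) <= (f a + d) * t).
Proof.
  intros Hs a d c Ha Hd Hc.
  destruct (pdf_continuous F f Hs a Ha d Hd) as [r [Hr Hrf]].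
  set (t := Rmin (r / 2) c).
  assert (Ht : 0 < t) by (unfold t; apply Rmin_glb_lt; lra).
  assert (Htr : t < r) by (unfold t; pose proof (Rmin_l (r / 2) c); lra).
  assert (Hclose : forall z, 0 <= z <= 1 -> Rabs (z - a) <= t -> f a - d <= f z <= f a + d).
  { intros z Hz Hza.
    pose proof (Rabs_def2 _ _ (Hrf z Hz ltac:(lra))). lra. }
  exists t. split; [split; [lra | apply Rmin_r] |]. split.
  - intros Hat.
    destruct (cdf_increment F f Hs a (a + t) ltac:(lra) ltac:(lra) Hat) as [I E].
    rewrite E. replace t with (a + t - a) at 1 by ring.
    apply (RInt_const_bounds f a (a + t) _ (f a + d)); [lra | exact I |].
    intros z Hz. apply Hclose; [lra | rewrite Rabs_right; lra].
  - intros Hat.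
    destruct (cdf_increment F f Hs (a - t) a Hat ltac:(lra) ltac:(lra)) as [I E].
    rewrite E. replace t with (a - (a - t)) at 2 by ring.
    apply (RInt_const_bounds f (a - t) a (f a - d)); [lra | exact I |].
    intros z Hz. apply Hclose; [lra | rewrite Rabs_left; lra].
Qed.

Lemma tangent_below (F f : R -> R) : smooth_dist01 F f -> convex_on01 F ->
  forall a u, 0 <= a <= 1 -> 0 <= u <= 1 -> F a + f a * (u - a) <= F u.
Proof.
  intros Hs Hc a u Ha Hu.
  destruct (Rle_or_lt (F a + f a * (u - a)) (F u)) as [Hok | Hbad]; [exact Hok | exfalso].
  destruct (Rtotal_order a u) as [Hlt | [Heq | Hgt]]; [| subst; lra |].
  - set (d := (F a + f a * (u - a) - F u) / (u - a)).
    assert (Hdd : d * (u - a) = F a + f a * (u - a) - F u) by (unfold d; field; lra).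
    assert (Hd : 0 < d) by (unfold d; apply Rdiv_lt_0_compat; lra).
    destruct (cdf_local_slope F f Hs a (d / 2) (u - a) Ha ltac:(lra) ltac:(lra))
      as [t [Ht [Hslope _]]].
    specialize (Hslope ltac:(lra)).
    pose proof (convex_chord F Hc a (a + t) u ltac:(lra) ltac:(lra) ltac:(lra) ltac:(lra) ltac:(lra)).
    assert (Hsec : (f a - d / 2) * (u - a) <= F u - F a).
    { apply (Rmult_le_reg_l t); [lra |]. nra. }
    nra.
  - set (d := (F a + f a * (u - a) - F u) / (a - u)).
    assert (Hdd : d * (a - u) = F a + f a * (u - a) - F u) by (unfold d; field; lra).
    assert (Hd : 0 < d) by (unfold d; apply Rdiv_lt_0_compat; lra).
    destruct (cdf_local_slope F f Hs a (d / 2) (a - u) Ha ltac:(lra) ltac:(lra))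
      as [t [Ht [_ Hslope]]].
    specialize (Hslope ltac:(lra)).
    pose proof (convex_chord F Hc u (a - t) a ltac:(lra) ltac:(lra) ltac:(lra) ltac:(lra) ltac:(lra)).
    assert (Hsec : F a - F u <= (f a + d / 2) * (a - u)).
    { apply (Rmult_le_reg_l t); [lra |]. nra. }
    nra.
Qed.

(* The CDF is non-decreasing everywhere: on [0,1] because the tangent slopes
   f >= 0, and it is constant 0 / 1 outside. *)
Lemma cdf_monotone (F f : R -> R) : smooth_dist01 F f -> convex_on01 F ->
  forall x y, x <= y -> F x <= F y.
Proof.
  intros Hs Hc. pose proof Hs as (Hf0 & _ & HFl & HFr & _).
  assert (Hmon01 : forall x y, 0 <= x -> x <= y -> y <= 1 -> F x <= F y).
  { intros x y H1 H2 H3. pose proof (tangent_below F f Hs Hc x y ltac:(lra) ltac:(lra)).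
    pose proof (Hf0 x). nra. }
  assert (Hrange : forall z, 0 <= F z <= 1).
  { intros z. destruct (Rle_dec z 0); [rewrite HFl; lra |].
    destruct (Rle_dec 1 z); [rewrite HFr; lra |].
    rewrite <- (HFl 0), <- (HFr 1) by lra. split; apply Hmon01; lra. }
  intros x y Hxy.
  destruct (Rle_dec x 0); [rewrite (HFl x) by lra; apply Hrange |].
  destruct (Rle_dec 1 y); [rewrite (HFr y) by lra; apply Hrange |].
  apply Hmon01; lra.
Qed.

Lemma pdf_monotone (F f : R -> R) : smooth_dist01 F f -> convex_on01 F ->
  forall x y, 0 <= x -> x <= y -> y <= 1 -> f x <= f y.
Proof.
  intros Hs Hc x y H1 H2 H3. destruct (Req_dec x y) as [-> | Hne]; [lra |].
  pose proof (tangent_below F f Hs Hc x y ltac:(lra) ltac:(lra)).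
  pose proof (tangent_below F f Hs Hc y x ltac:(lra) ltac:(lra)).
  nra.
Qed.

Lemma cdf_range (F f : R -> R) : smooth_dist01 F f -> convex_on01 F ->
  forall z, 0 <= F z <= 1.
Proof.
  intros Hs Hc z. pose proof Hs as (_ & _ & HFl & HFr & _).
  rewrite <- (HFl (Rmin z 0)), <- (HFr (Rmax z 1)) by (apply Rmin_r || apply Rmax_r).
  split; apply (cdf_monotone F f Hs Hc); [apply Rmin_l | apply Rmax_l].
Qed.

Lemma right_continuous_of_agree (g k : R -> R) x r : 0 < r ->
  (forall y, x <= y < x + r -> g y = k y) -> continuous k x ->
  filterlim g (at_right x) (locally (g x)).
Proof.
  intros Hr Hagree Hk.
  rewrite (Hagree x) by lra.
  apply (filterlim_ext_loc (FF := @filter_filter _ _ (at_right_proper_filter x)) k).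
  - exists (mkposreal r Hr). intros y Hy Hxy.
    change (Rabs (y - x) < r) in Hy. apply Rabs_def2 in Hy.
    symmetry. apply Hagree. lra.
  - exact (filterlim_filter_le_1 k (@filter_le_within _ (locally x) filter_filter _) Hk).
Qed.

Definition secant (a ya b yb v : R) : R := ya + (yb - ya) * (v - a) / (b - a).

Lemma secant_continuous a ya b yb v : a < b -> continuous (secant a ya b yb) v.
Proof.
  intros Hab. apply (ex_derive_continuous (secant a ya b yb)). unfold secant. auto_derive. lra.
Qed.

Lemma secant_monotone a ya b yb v w : a < b -> ya <= yb -> v <= w ->
  secant a ya b yb v <= secant a ya b yb w.
Proof.
  intros H1 H2 H3. unfold secant.
  assert (Hk : 0 <= (yb - ya) / (b - a))
    by (apply Rmult_le_pos; [lra | left; apply Rinv_0_lt_compat; lra]).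
  replace ((yb - ya) * (v - a) / (b - a)) with ((yb - ya) / (b - a) * (v - a)) by (field; lra).
  replace ((yb - ya) * (w - a) / (b - a)) with ((yb - ya) / (b - a) * (w - a)) by (field; lra).
  nra.
Qed.

Lemma secant_between a ya b yb v : a < b -> ya <= yb -> a <= v <= b ->
  ya <= secant a ya b yb v <= yb.
Proof.
  intros H1 H2 H3.
  assert (Ea : secant a ya b yb a = ya) by (unfold secant; field; lra).
  assert (Eb : secant a ya b yb b = yb) by (unfold secant; field; lra).
  pose proof (secant_monotone a ya b yb a v H1 H2 ltac:(lra)).
  pose proof (secant_monotone a ya b yb v b H1 H2 ltac:(lra)).
  lra.
Qed.

Lemma convex_below_secant (F : R -> R) a b v : convex_on01 F ->
  0 <= a <= v -> v < b <= 1 -> F v <= secant a (F a) b (F b) v.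
Proof.
  intros Hc Ha Hb.
  pose proof (convex_chord F Hc a v b ltac:(lra) ltac:(lra) ltac:(lra) ltac:(lra) ltac:(lra)).
  unfold secant. apply (Rmult_le_reg_r (b - a)); [lra |].
  replace ((F a + (F b - F a) * (v - a) / (b - a)) * (b - a))
    with ((b - v) * F a + (v - a) * F b) by (field; lra).
  lra.
Qed.

(* The learner's output: piecewise-linear interpolation of the sampled values
   of F, through (0, 0), (1, 1) and every queried point (x, F x); the
   neighbouring nodes of v are found by two folds over the samples. *)
Definition samples (h : history) : list (R * R) := map (fun e => (fst e, fst (snd e))) h.

Definition left_step (v : R) (acc p : R * R) : R * R :=
  if Rle_dec (fst p) v then (if Rlt_dec (fst acc) (fst p) then p else acc) else acc.
Definition right_step (v : R) (acc p : R * R) : R * R :=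
  if Rlt_dec v (fst p) then (if Rlt_dec (fst p) (fst acc) then p else acc) else acc.

Definition interp (h : history) (v : R) : R :=
  if Rlt_dec v 0 then 0 else if Rle_dec 1 v then 1 else
  let pa := fold_left (left_step v) (samples h) (0, 0) in
  let pb := fold_left (right_step v) (samples h) (1, 1) in
  secant (fst pa) (snd pa) (fst pb) (snd pb) v.

Definition records (F : R -> R) (h : history) : Prop :=
  forall e, In e h -> fst (snd e) = F (fst e).

Definition neighbours (xs : list R) (v a b : R) : Prop :=
  0 <= a <= v /\ v < b <= 1 /\ (a = 0 \/ In a xs) /\ (b = 1 \/ In b xs) /\
  (forall x, In x xs -> x <= v -> x <= a) /\ (forall x, In x xs -> v < x -> b <= x).

Lemma left_step_fold v pts : forall acc, let r := fold_left (left_step v) pts acc in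
  (r = acc \/ In r pts) /\ fst acc <= fst r /\ (fst acc <= v -> fst r <= v) /\
  (forall p, In p pts -> fst p <= v -> fst p <= fst r).
Proof.
  induction pts as [| p pts IH]; intros acc; simpl.
  - repeat split; auto; [lra | intros _ []].
  - destruct (IH (left_step v acc p)) as (H1 & H2 & H3 & H4).
    unfold left_step in *.
    destruct (Rle_dec (fst p) v); [destruct (Rlt_dec (fst acc) (fst p)) |];
      (split; [destruct H1 as [E | Hin]; [rewrite E |]; auto |]); (split; [lra |]); (split; [auto |]);
      intros p' [-> | Hin]; auto; lra.
Qed.

Lemma right_step_fold v pts : forall acc, let r := fold_left (right_step v) pts acc in
  (r = acc \/ In r pts) /\ fst r <= fst acc /\ (v < fst acc -> v < fst r) /\
  (forall p, In p pts -> v < fst p -> fst r <= fst p).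
Proof.
  induction pts as [| p pts IH]; intros acc; simpl.
  - repeat split; auto; [lra | intros _ []].
  - destruct (IH (right_step v acc p)) as (H1 & H2 & H3 & H4).
    unfold right_step in *.
    destruct (Rlt_dec v (fst p)); [destruct (Rlt_dec (fst p) (fst acc)) |];
      (split; [destruct H1 as [E | Hin]; [rewrite E |]; auto |]); (split; [lra |]); (split; [auto |]);
      intros p' [-> | Hin]; auto; lra.
Qed.

Lemma sample_on_graph (F : R -> R) h p : records F h -> In p (samples h) ->
  snd p = F (fst p) /\ In (fst p) (map fst h).
Proof.
  intros Hh Hp. apply in_map_iff in Hp. destruct Hp as [e [<- He]]. simpl.
  split; [apply Hh, He | apply in_map, He].
Qed.

Lemma in_samples h x : In x (map fst h) -> exists y, In (x, y) (samples h).
Proof.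
  intros Hx. apply in_map_iff in Hx. destruct Hx as [e [<- He]].
  exists (fst (snd e)). apply in_map_iff. eauto.
Qed.

Lemma interp_neighbours (F : R -> R) (h : history) v :
  F 0 = 0 -> F 1 = 1 -> records F h -> 0 <= v < 1 ->
  exists a b, neighbours (map fst h) v a b /\ interp h v = secant a (F a) b (F b) v.
Proof.
  intros F0 F1 Hh Hv.
  destruct (left_step_fold v (samples h) (0, 0)) as (A1 & A2 & A3 & A4).
  destruct (right_step_fold v (samples h) (1, 1)) as (B1 & B2 & B3 & B4).
  simpl in *.
  set (pa := fold_left (left_step v) (samples h) (0, 0)) in *.
  set (pb := fold_left (right_step v) (samples h) (1, 1)) in *.
  assert (Ha : snd pa = F (fst pa) /\ (fst pa = 0 \/ In (fst pa) (map fst h))).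
  { destruct A1 as [-> | Hin]; [simpl; auto |].
    destruct (sample_on_graph F h pa Hh Hin); auto. }
  assert (Hb : snd pb = F (fst pb) /\ (fst pb = 1 \/ In (fst pb) (map fst h))).
  { destruct B1 as [-> | Hin]; [simpl; auto |].
    destruct (sample_on_graph F h pb Hh Hin); auto. }
  exists (fst pa), (fst pb). split.
  - repeat split; try lra; try tauto; intros x Hx Hxv;
      destruct (in_samples h x Hx) as [y Hy];
      [apply (A4 (x, y) Hy) | apply (B4 (x, y) Hy)]; exact Hxv.
  - unfold interp. destruct (Rlt_dec v 0); [lra |]. destruct (Rle_dec 1 v); [lra |].
    fold pa pb. rewrite (proj1 Ha), (proj1 Hb). reflexivity.
Qed.

Lemma neighbours_shift xs v w a b :
  neighbours xs v a b -> a <= w < b -> neighbours xs w a b.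
Proof.
  intros (Ha & Hb & Sa & Sb & Ma & Mb) Hw.
  repeat split; auto; try lra; intros x Hx Hxw;
    destruct (Rle_dec x v); [apply Ma | | | apply Mb]; auto; try lra;
    [specialize (Mb x Hx ltac:(lra)) | specialize (Ma x Hx ltac:(lra))]; lra.
Qed.

Lemma neighbours_unique xs v a b a' b' :
  neighbours xs v a b -> neighbours xs v a' b' -> a = a' /\ b = b'.
Proof.
  intros (Ha & Hb & Sa & Sb & Ma & Mb) (Ha' & Hb' & Sa' & Sb' & Ma' & Mb').
  split; apply Rle_antisym.
  - destruct Sa as [-> | Sa]; [lra | apply Ma'; auto; lra].
  - destruct Sa' as [-> | Sa']; [lra | apply Ma; auto; lra].
  - destruct Sb' as [-> | Sb']; [lra | apply Mb; auto; lra].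
  - destruct Sb as [-> | Sb]; [lra | apply Mb'; auto; lra].
Qed.

Lemma interp_on_gap (F : R -> R) (h : history) v a b w :
  F 0 = 0 -> F 1 = 1 -> records F h -> neighbours (map fst h) v a b -> a <= w < b ->
  interp h w = secant a (F a) b (F b) w.
Proof.
  intros F0 F1 Hh Hn Hw.
  pose proof (neighbours_shift _ _ _ _ _ Hn Hw) as Hnw.
  destruct (interp_neighbours F h w F0 F1 Hh ltac:(destruct Hnw; lra)) as (a' & b' & Hn' & E).
  destruct (neighbours_unique _ _ _ _ _ _ Hnw Hn') as [<- <-]. exact E.
Qed.

Lemma interp_left (h : history) v : v < 0 -> interp h v = 0.
Proof. intros Hv. unfold interp. destruct (Rlt_dec v 0); [reflexivity | lra]. Qed.

Lemma interp_right (h : history) v : 1 <= v -> interp h v = 1.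
Proof.
  intros Hv. unfold interp.
  destruct (Rlt_dec v 0); [lra |]. destruct (Rle_dec 1 v); [reflexivity | lra].
Qed.

Section InterpolationIsCdf.

Variables (F : R -> R) (h : history).
Hypothesis F_mono : forall x y, x <= y -> F x <= F y.
Hypothesis F0 : F 0 = 0.
Hypothesis F1 : F 1 = 1.
Hypothesis Hrec : records F h.

Lemma interp_between_nodes v a b : neighbours (map fst h) v a b ->
  F a <= interp h v <= F b.
Proof.
  intros Hn. pose proof Hn as (Ha & Hb & _).
  rewrite (interp_on_gap F h v a b v F0 F1 Hrec Hn ltac:(lra)).
  apply secant_between; [lra | apply F_mono; lra | lra].
Qed.

Lemma interp_range v : 0 <= interp h v <= 1.
Proof.
  destruct (Rlt_dec v 0); [rewrite interp_left; lra |].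
  destruct (Rle_dec 1 v); [rewrite interp_right; lra |].
  destruct (interp_neighbours F h v F0 F1 Hrec ltac:(lra)) as (a & b & Hn & _).
  pose proof (interp_between_nodes v a b Hn). pose proof Hn as (Ha & Hb & _).
  rewrite <- F0, <- F1. pose proof (F_mono 0 a). pose proof (F_mono b 1). lra.
Qed.

(* Monotonicity: within a gap the output is an increasing secant; across a
   node b it passes through F b. *)
Lemma interp_monotone x y : x <= y -> interp h x <= interp h y.
Proof.
  intros Hxy.
  destruct (Rlt_dec x 0); [rewrite (interp_left h x); [apply interp_range | lra] |].
  destruct (Rle_dec 1 y); [rewrite (interp_right h y); [apply interp_range | lra] |].
  destruct (interp_neighbours F h x F0 F1 Hrec ltac:(lra)) as (a & b & Hn & E).
  pose proof Hn as (Ha & Hb & Sa & Sb & Ma & Mb).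
  destruct (Rlt_dec y b).
  - rewrite E, (interp_on_gap F h x a b y F0 F1 Hrec Hn ltac:(lra)).
    apply secant_monotone; [lra | apply F_mono; lra | lra].
  - destruct Sb as [-> | Sb]; [lra |].
    destruct (interp_neighbours F h y F0 F1 Hrec ltac:(lra)) as (a' & b' & Hn' & _).
    pose proof Hn' as (_ & _ & _ & _ & Ma' & _).
    pose proof (interp_between_nodes x a b Hn). pose proof (interp_between_nodes y a' b' Hn').
    pose proof (F_mono b a' (Ma' b Sb ltac:(lra))). lra.
Qed.

(* Right-continuity: near any point the output is locally constant or affine. *)
Lemma interp_right_continuous x : filterlim (interp h) (at_right x) (locally (interp h x)).
Proof.
  destruct (Rlt_dec x 0).
  { apply (right_continuous_of_agree _ (fun _ => 0) x (- x)); [lra | | apply continuous_const].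
    intros y Hy. apply interp_left. lra. }
  destruct (Rle_dec 1 x).
  { apply (right_continuous_of_agree _ (fun _ => 1) x 1); [lra | | apply continuous_const].
    intros y Hy. apply interp_right. lra. }
  destruct (interp_neighbours F h x F0 F1 Hrec ltac:(lra)) as (a & b & Hn & _).
  pose proof Hn as (Ha & Hb & _).
  apply (right_continuous_of_agree _ (secant a (F a) b (F b)) x (b - x)); [lra | |].
  - intros y Hy. apply (interp_on_gap F h x a b y F0 F1 Hrec Hn). lra.
  - apply secant_continuous. lra.
Qed.

Lemma interp_is_cdf : is_cdf (interp h).
Proof.
  split; [exact interp_monotone |]. split; [exact interp_right_continuous |]. split.
  - apply is_lim_ext_loc with (fun _ => 0); [| apply is_lim_const].
    exists 0. intros y Hy. symmetry. apply interp_left, Hy.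
  - apply is_lim_ext_loc with (fun _ => 1); [| apply is_lim_const].
    exists 1. intros y Hy. symmetry. apply interp_right. lra.
Qed.

End InterpolationIsCdf.

Lemma transcript_records (A : algorithm) F f n : records F (transcript A F f n).
Proof.
  induction n as [| n IH]; intros e He; simpl in He; [destruct He |].
  apply in_app_or in He. destruct He as [He | [<- | []]]; [apply IH, He | reflexivity].
Qed.

Lemma transcript_queries (A : algorithm) F f n k : (k < n)%nat ->
  In (next A (transcript A F f k)) (map fst (transcript A F f n)).
Proof.
  induction n as [| n IH]; intros Hk; [lia |].
  simpl. rewrite map_app. apply in_or_app.
  destruct (Nat.eq_dec k n) as [-> | Hne]; [right; left; reflexivity | left; apply IH; lia].
Qed.

(* Used with N1 = 2M and step h = 1/M, it considers 3M level
   sets: for i < 2M the potential x + F x at level (i+1) h, and for the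
   remaining M indices the potential f x / (1 + f x) at level (i-2M+1) h.  Both potentials are
   non-decreasing on [0,1].  For each index in turn it runs L steps of
   bisection on [0,1] locating the crossing of the level; the output is the
   interpolation of all sampled values of F. *)
Definition potential (N1 i : nat) (x Fx fx : R) : R :=
  if Nat.ltb i N1 then x + Fx else fx / (1 + fx).

Definition level (N1 : nat) (h : R) (i : nat) : R :=
  if Nat.ltb i N1 then INR (S i) * h else INR (S (i - N1)) * h.

(* Current level index, bisection depth, and current search interval. *)
Record search_state := mkstate { target : nat; depth : nat; lo : R; hi : R }.

Definition search_init : search_state := mkstate 0 0 0 1.
Definition midpoint (s : search_state) : R := (lo s + hi s) / 2.

Definition search_step (N1 : nat) (h : R) (L : nat) (s : search_state)
    (e : R * (R * R)) : search_state :=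
  let below := Rlt_dec (potential N1 (target s) (fst e) (fst (snd e)) (snd (snd e)))
                       (level N1 h (target s)) in
  if Nat.eqb (S (depth s)) L then mkstate (S (target s)) 0 0 1
  else mkstate (target s) (S (depth s))
         (if below then fst e else lo s) (if below then hi s else fst e).

Definition learner (N1 : nat) (h : R) (L : nat) : algorithm :=
  {| next := fun hs => midpoint (fold_left (search_step N1 h L) hs search_init);
     output := interp |}.

Definition state_after N1 h L F f k : search_state :=
  fold_left (search_step N1 h L) (transcript (learner N1 h L) F f k) search_init.

Lemma state_after_S N1 h L F f k : state_after N1 h L F f (S k) =
  let x := midpoint (state_after N1 h L F f k) in
  search_step N1 h L (state_after N1 h L F f k) (x, (F x, f x)).
Proof. unfold state_after at 1. simpl. rewrite fold_left_app. reflexivity. Qed.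

Section Bisection.

Variables (F f : R -> R) (N1 : nat) (h : R) (L : nat) (a b : R).
Hypothesis L_pos : (1 <= L)%nat.
Hypothesis potential_mono : forall i x y, 0 <= x -> x <= y -> y <= 1 ->
  potential N1 i x (F x) (f x) <= potential N1 i y (F y) (f y).
Hypothesis gap_in_unit : 0 <= a < b /\ b <= 1.

Definition crosses (i : nat) : Prop :=
  potential N1 i a (F a) (f a) < level N1 h i <= potential N1 i b (F b) (f b).

(* Invariant after k queries, provided none of them fell inside (a, b):
   the bookkeeping (index, depth) counts the queries, the current interval has
   width 2^-depth and contains [a, b] if the current level is crossed there,
   and every finished crossed level forced b - a <= 2^-L. *)
Definition bisection_invariant (k : nat) (s : search_state) : Prop :=
  (target s * L + depth s = k)%nat /\ (depth s < L)%nat /\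
  0 <= lo s <= hi s /\ hi s <= 1 /\ hi s - lo s = / 2 ^ depth s /\
  (crosses (target s) -> lo s <= a /\ b <= hi s) /\
  (forall i, (i < target s)%nat -> crosses i -> b - a <= / 2 ^ L).

Lemma bisection_invariant_step k s : bisection_invariant k s ->
  ~ (a < midpoint s < b) ->
  let x := midpoint s in bisection_invariant (S k) (search_step N1 h L s (x, (F x, f x))).
Proof.
  intros (C1 & C2 & B1 & B2 & W & Hin & Hdone) Hgap x.
  assert (Hx : lo s <= x <= hi s) by (unfold x, midpoint; lra).
  assert (Hout : x <= a \/ b <= x).
  { destruct (Rle_dec x a); [left; lra | right].
    destruct (Rle_dec b x); [lra | exfalso; apply Hgap; fold x; lra]. }
  set (below := Rlt_dec (potential N1 (target s) x (F x) (f x)) (level N1 h (target s))).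
  set (lo' := if below then x else lo s).
  set (hi' := if below then hi s else x).
  assert (Wn : hi' - lo' = / 2 ^ (S (depth s))).
  { simpl. rewrite Rinv_mult. unfold lo', hi'. destruct below; unfold x, midpoint; lra. }
  assert (Inn : crosses (target s) -> lo' <= a /\ b <= hi').
  { intros HP. destruct (Hin HP) as [Hla Hbh]. destruct HP as [HP1 HP2].
    unfold lo', hi'. destruct below as [Hc | Hc].
    - split; [| lra]. destruct Hout as [| Hbx]; auto. exfalso.
      pose proof (potential_mono (target s) b x ltac:(lra) ltac:(lra) ltac:(lra)). lra.
    - split; [lra |]. destruct Hout as [Hxa |]; auto. exfalso.
      pose proof (potential_mono (target s) x a ltac:(lra) ltac:(lra) ltac:(lra)). lra. }
  unfold search_step. cbv zeta. simpl fst; simpl snd. fold x below lo' hi'.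
  destruct (Nat.eqb (S (depth s)) L) eqn:EL.
  - apply Nat.eqb_eq in EL. repeat split; simpl; try lia; try lra.
    intros i Hi HP. destruct (Nat.eq_dec i (target s)) as [-> | Hne].
    + destruct (Inn HP). rewrite <- EL, <- Wn. lra.
    + apply (Hdone i); auto; lia.
  - apply Nat.eqb_neq in EL.
    repeat split; simpl; try lia; try lra; try tauto; unfold lo', hi'; destruct below; lra.
Qed.

Lemma bisection_resolves N :
  (forall k, (k < N * L)%nat -> ~ (a < midpoint (state_after N1 h L F f k) < b)) ->
  forall i, (i < N)%nat -> crosses i -> b - a <= / 2 ^ L.
Proof.
  intros Hgap.
  assert (Inv : forall k, (k <= N * L)%nat ->
            bisection_invariant k (state_after N1 h L F f k)).
  { induction k as [| k IH]; intros Hk.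
    - repeat split; simpl; try lia; try lra; intros; lra || lia.
    - rewrite state_after_S. apply bisection_invariant_step; [apply IH | apply Hgap]; lia. }
  intros i Hi Hcross.
  destruct (Inv (N * L)%nat ltac:(lia)) as (C1 & C2 & _ & _ & _ & _ & Hdone).
  apply (Hdone i); [nia | exact Hcross].
Qed.

End Bisection.

Lemma levels_bound_increment (h : R) (K : nat) ya yb : 0 < h -> 0 <= ya -> ya < INR K * h ->
  (forall j, (j < K)%nat -> ~ (ya < INR (S j) * h <= yb)) -> yb - ya <= h.
Proof.
  intros Hh Hya HyK Hnone.
  assert (Hband : exists j, (j < K)%nat /\ INR j * h <= ya < INR (S j) * h).
  { clear Hnone. induction K as [| K IH]; [simpl in HyK; lra |].
    destruct (Rlt_dec ya (INR K * h)) as [Hl | Hl].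
    - destruct (IH Hl) as [j [Hj1 Hj2]]. exists j. split; [lia | exact Hj2].
    - exists K. split; [lia | rewrite S_INR in *; lra]. }
  destruct Hband as [j [Hj Hband]].
  destruct (Rle_dec (yb - ya) h) as [| Hbig]; [assumption | exfalso].
  apply (Hnone j Hj). rewrite S_INR in *. lra.
Qed.

Lemma secant_error (Fa Fb Fu al be a b v eps h : R) :
  a <= v -> v + eps < b -> 0 < eps -> 0 <= h -> h * h <= eps ->
  0 <= al -> al <= be -> al * (b - a) <= Fb - Fa ->
  (b - a) + (Fb - Fa) <= h -> be - al <= h * (1 + al) * (1 + be) ->
  Fa + al * (v + eps - a) <= Fu -> Fb + be * (v + eps - b) <= Fu ->
  secant a Fa b Fb v - eps <= Fu.
Proof.
  intros H1 H2 He Hh Hhe Ha Hab HFa D1 D2 TA TB.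
  set (t := v - a). set (r := b - v).
  assert (Ht : 0 <= t) by (unfold t; lra).
  assert (Hr : 0 < r) by (unfold r; lra).
  assert (Hsec : secant a Fa b Fb v = (r * Fa + t * Fb) / (t + r))
    by (unfold secant, t, r; field; lra).
  (* the convex combination of the two tangent bounds with weights r and t *)
  assert (Hcomb : r * Fa + t * Fb + (al - be) * t * r + eps * (al * r + be * t) <= (t + r) * Fu).
  { replace (r * Fa + t * Fb + (al - be) * t * r + eps * (al * r + be * t))
      with (r * (Fa + al * (v + eps - a)) + t * (Fb + be * (v + eps - b))) by (unfold r, t; ring).
    nra. }
  assert (Hra : r * (1 + al) <= h).
  { assert (r * (1 + al) <= (b - a) * (1 + al)) by (apply Rmult_le_compat_r; unfold r; lra).
    lra. }
  assert (Hslope : (be - al) * t * r <= eps * (t * (1 + be))).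
  { assert (Htb : 0 <= t * (1 + be)) by nra.
    apply Rle_trans with (h * (r * (1 + al)) * (t * (1 + be))).
    { replace (h * (r * (1 + al)) * (t * (1 + be))) with (h * (1 + al) * (1 + be) * (t * r)) by ring.
      replace ((be - al) * t * r) with ((be - al) * (t * r)) by ring.
      apply Rmult_le_compat_r; [nra | exact D2]. }
    apply Rle_trans with (h * h * (t * (1 + be))); [| nra].
    apply Rmult_le_compat_r; [exact Htb | apply Rmult_le_compat_l; lra]. }
  rewrite Hsec. apply (Rmult_le_reg_l (t + r)); [lra |].
  replace ((t + r) * ((r * Fa + t * Fb) / (t + r) - eps)) with (r * Fa + t * Fb - eps * (t + r))
    by (field; lra).
  assert (Hpos : 0 <= (al - be) * t * r + eps * (al * r + be * t) + eps * (t + r)).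
  { replace ((al - be) * t * r + eps * (al * r + be * t) + eps * (t + r))
      with ((eps * (t * (1 + be)) - (be - al) * t * r) + eps * (r * (1 + al))) by ring.
    assert (0 <= eps * (r * (1 + al))) by (apply Rmult_le_pos; lra || nra).
    lra. }
  lra.
Qed.

Lemma potential_monotone (F f : R -> R) N1 : smooth_dist01 F f -> convex_on01 F ->
  forall i x y, 0 <= x -> x <= y -> y <= 1 ->
  potential N1 i x (F x) (f x) <= potential N1 i y (F y) (f y).
Proof.
  intros Hs Hc i x y H1 H2 H3. unfold potential. destruct (Nat.ltb i N1).
  - pose proof (cdf_monotone F f Hs Hc x y H2). lra.
  - pose proof (pdf_monotone F f Hs Hc x y H1 H2 H3).
    destruct Hs as (Hf0 & _). pose proof (Hf0 x). pose proof (Hf0 y).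
    apply (Rmult_le_reg_r ((1 + f x) * (1 + f y))); [nra |].
    field_simplify; nra.
Qed.

Lemma no_query_in_gap N1 h L F f n v a b :
  neighbours (map fst (transcript (learner N1 h L) F f n)) v a b ->
  forall k, (k < n)%nat -> ~ (a < midpoint (state_after N1 h L F f k) < b).
Proof.
  intros (_ & _ & _ & _ & Ma & Mb) k Hk Hin.
  pose proof (transcript_queries (learner N1 h L) F f n k Hk) as Hq.
  change (next (learner N1 h L) (transcript (learner N1 h L) F f k))
    with (midpoint (state_after N1 h L F f k)) in Hq.
  destruct (Rle_dec (midpoint (state_after N1 h L F f k)) v).
  - specialize (Ma _ Hq r). lra.
  - specialize (Mb _ Hq ltac:(lra)). lra.
Qed.

Section LearnerCorrect.

Variables (M L : nat) (eps : R) (F f : R -> R).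
Hypothesis M_pos : (1 <= M)%nat.
Hypothesis L_pos : (1 <= L)%nat.
Hypothesis eps_pos : 0 < eps.
Hypothesis step_small : / INR M * / INR M <= eps.
Hypothesis depth_enough : / 2 ^ L <= eps.
Hypothesis F_smooth : smooth_dist01 F f.
Hypothesis F_convex : convex_on01 F.

Let h := / INR M.
Let tr := transcript (learner (2 * M) h L) F f (3 * M * L).

Lemma step_pos : 0 < h.
Proof. unfold h. apply Rinv_0_lt_compat, lt_0_INR. lia. Qed.

Lemma step_times_M : INR M * h = 1.
Proof. unfold h. field. apply not_0_INR. lia. Qed.

(* A gap longer than 2^-L is flat: no level set is crossed inside it, so the
   increments of both potentials over it are at most h. *)
Lemma gap_is_flat v a b : neighbours (map fst tr) v a b -> / 2 ^ L < b - a ->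
  (b + F b) - (a + F a) <= h /\ f b - f a <= h * (1 + f a) * (1 + f b).
Proof.
  intros Hn Hlong. pose proof Hn as (Ha & Hb & _).
  assert (Hnone : forall i, (i < 3 * M)%nat -> ~ crosses F f (2 * M) h a b i).
  { intros i Hi Hcross.
    assert (Hres := bisection_resolves F f (2 * M) h L a b L_pos
                      (potential_monotone F f (2 * M) F_smooth F_convex) ltac:(lra) (3 * M)).
    pose proof (Hres (no_query_in_gap _ _ _ F f _ v a b Hn) i Hi Hcross). lra. }
  pose proof (cdf_range F f F_smooth F_convex a). pose proof (cdf_range F f F_smooth F_convex b).
  pose proof step_pos. pose proof step_times_M.
  destruct F_smooth as (Hf0 & _). pose proof (Hf0 a). pose proof (Hf0 b).
  split.
  - apply (levels_bound_increment h (2 * M)); [lra | lra | rewrite mult_INR; simpl; lra |].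
    intros j Hj Hcross. apply (Hnone j ltac:(lia)).
    unfold crosses, potential, level. rewrite (proj2 (Nat.ltb_lt j (2 * M)) Hj). exact Hcross.
  - assert (Hfrac : forall z, 0 <= f z -> 0 <= f z / (1 + f z) < 1).
    { intros z Hz. split; [apply Rdiv_le_0_compat; lra |].
      apply (Rmult_lt_reg_r (1 + f z)); [lra |]. field_simplify; lra. }
    assert (Hinc : f b / (1 + f b) - f a / (1 + f a) <= h).
    { apply (levels_bound_increment h M); [lra | apply Hfrac; lra | pose proof (Hfrac a); lra |].
      intros j Hj Hcross. apply (Hnone (2 * M + j)%nat ltac:(lia)).
      unfold crosses, potential, level.
      rewrite (proj2 (Nat.ltb_ge (2 * M + j) (2 * M)) ltac:(lia)).
      replace (2 * M + j - 2 * M)%nat with j by lia. exact Hcross. }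
    replace (f b / (1 + f b) - f a / (1 + f a)) with ((f b - f a) / ((1 + f a) * (1 + f b)))
      in Hinc by (field; lra).
    apply (Rmult_le_reg_r (/ ((1 + f a) * (1 + f b)))); [apply Rinv_0_lt_compat; nra |].
    replace (h * (1 + f a) * (1 + f b) * / ((1 + f a) * (1 + f b))) with h by (field; lra).
    exact Hinc.
Qed.

Lemma interp_upper v a b : neighbours (map fst tr) v a b ->
  interp tr v <= F (v + eps) + eps.
Proof.
  intros Hn. pose proof Hn as (Ha & Hb & _).
  pose proof F_smooth as (Hf0 & _ & HFl & HFr & _).
  assert (F0 : F 0 = 0) by (apply HFl; lra). assert (F1 : F 1 = 1) by (apply HFr; lra).
  pose proof (transcript_records (learner (2 * M) h L) F f (3 * M * L)) as Hrec.
  rewrite (interp_on_gap F tr v a b v F0 F1 Hrec Hn ltac:(lra)).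
  assert (Fab : F a <= F b) by (apply (cdf_monotone F f F_smooth F_convex); lra).
  destruct (Rle_dec b (v + eps)) as [Hbv | Hbv].
  { pose proof (secant_between a (F a) b (F b) v ltac:(lra) Fab ltac:(lra)).
    pose proof (cdf_monotone F f F_smooth F_convex b (v + eps) Hbv). lra. }
  destruct (gap_is_flat v a b Hn ltac:(lra)) as [D1 D2].
  pose proof (tangent_below F f F_smooth F_convex) as Tg.
  pose proof (Tg a b ltac:(lra) ltac:(lra)). pose proof (Tg a (v + eps) ltac:(lra) ltac:(lra)).
  pose proof (Tg b (v + eps) ltac:(lra) ltac:(lra)).
  pose proof (pdf_monotone F f F_smooth F_convex a b ltac:(lra) ltac:(lra) ltac:(lra)).
  pose proof step_pos.
  assert (Hh2 : h * h <= eps) by exact step_small.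
  pose proof (secant_error (F a) (F b) (F (v + eps)) (f a) (f b) a b v eps h
     ltac:(lra) ltac:(lra) eps_pos ltac:(lra) Hh2 (Hf0 a) ltac:(lra) ltac:(lra) ltac:(lra) D2
     ltac:(lra) ltac:(lra)).
  lra.
Qed.

Lemma learner_levy_bound v :
  F (v - eps) - eps <= interp tr v /\ interp tr v <= F (v + eps) + eps.
Proof.
  pose proof F_smooth as (_ & _ & HFl & HFr & _).
  assert (F0 : F 0 = 0) by (apply HFl; lra). assert (F1 : F 1 = 1) by (apply HFr; lra).
  pose proof (cdf_range F f F_smooth F_convex) as FB.
  pose proof (cdf_monotone F f F_smooth F_convex) as Fm.
  destruct (Rlt_dec v 0) as [Hv | Hv].
  { rewrite interp_left, (HFl (v - eps)) by lra. pose proof (FB (v + eps)). lra. }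
  destruct (Rle_dec 1 v) as [Hv' | Hv'].
  { rewrite interp_right, (HFr (v + eps)) by lra. pose proof (FB (v - eps)). lra. }
  destruct (interp_neighbours F tr v F0 F1
              (transcript_records _ F f _) ltac:(lra)) as (a & b & Hn & E).
  split; [| exact (interp_upper v a b Hn)].
  pose proof Hn as (Ha & Hb & _).
  rewrite E. pose proof (convex_below_secant F a b v F_convex Ha Hb).
  pose proof (Fm (v - eps) v ltac:(lra)). lra.
Qed.

End LearnerCorrect.

Lemma learner_correct (M L : nat) (eps : R) :
  (1 <= M)%nat -> (1 <= L)%nat -> 0 < eps -> / INR M * / INR M <= eps -> / 2 ^ L <= eps ->
  learns_with (learner (2 * M) (/ INR M) L) (3 * M * L) eps.
Proof.
  intros HM HL He Hh HLe F f Hs Hc. cbv zeta. simpl output.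
  pose proof Hs as (_ & _ & HFl & HFr & _).
  split.
  - apply (interp_is_cdf F); [exact (cdf_monotone F f Hs Hc) | apply HFl; lra | apply HFr; lra |].
    apply transcript_records.
  - apply Glb_Rbar_correct. intros v.
    apply (learner_levy_bound M L eps F f); assumption.
Qed.

(* Parameter choice: M ~ eps^{-1/2} and L ~ 2 ln (1/eps). *)
Lemma nat_in_window x : 0 <= x -> exists n : nat, x <= INR n <= x + 1.
Proof.
  intros Hx. destruct (archimed x) as [H1 H2].
  assert (Hz : (0 < up x)%Z) by (apply lt_0_IZR; lra).
  exists (Z.to_nat (up x)). rewrite INR_IZR_INZ, Z2Nat.id by lia. lra.
Qed.

Lemma ln2_gt_half : / 2 < ln 2.
Proof.
  assert (E : exp (/ 2) * exp (/ 2) = exp 1) by (rewrite <- exp_plus; f_equal; lra).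
  pose proof exp_le_3. pose proof (exp_pos (/ 2)).
  assert (exp (/ 2) < 2) by nra.
  rewrite <- (ln_exp (/ 2)). apply ln_increasing; auto.
Qed.

Lemma depth_condition (eps : R) (L : nat) : 0 < eps -> 2 * ln (/ eps) <= INR L ->
  / 2 ^ L <= eps.
Proof.
  intros He HL.
  assert (Hpow : / eps <= 2 ^ L).
  { rewrite <- (exp_ln (/ eps)), <- (exp_ln (2 ^ L)) by (apply Rinv_0_lt_compat || apply pow_lt; lra).
    rewrite ln_pow by lra. pose proof ln2_gt_half.
    assert (Hl : ln (/ eps) <= INR L * ln 2) by (pose proof (pos_INR L); nra).
    destruct (Rle_lt_or_eq_dec _ _ Hl) as [Hlt | ->]; [left; apply exp_increasing, Hlt | right; reflexivity]. }
  apply Rle_trans with (/ / eps); [| right; field; lra].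
  apply Rinv_le_contravar; [apply Rinv_0_lt_compat; lra | exact Hpow].
Qed.

Lemma step_condition (eps : R) (M : nat) : 0 < eps -> / sqrt eps <= INR M ->
  / INR M * / INR M <= eps.
Proof.
  intros He HM.
  assert (Hs : 0 < sqrt eps) by (apply sqrt_lt_R0, He).
  assert (HiM : / INR M <= sqrt eps).
  { rewrite <- (Rinv_inv (sqrt eps)). apply Rinv_le_contravar; [apply Rinv_0_lt_compat |]; lra. }
  assert (0 <= / INR M) by (left; apply Rinv_0_lt_compat; pose proof (Rinv_0_lt_compat _ Hs); lra).
  rewrite <- (sqrt_sqrt eps) by lra. apply Rmult_le_compat; assumption.
Qed.

Lemma query_count (eps : R) (M L : nat) : 0 < eps < / 3 ->
  / sqrt eps <= INR M <= / sqrt eps + 1 -> INR L <= 2 * ln (/ eps) + 1 ->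
  INR (3 * M * L) <= 18 * / sqrt eps * ln (/ eps) ^ 1.
Proof.
  intros [He0 He1] HM HL.
  assert (Hs : 0 < sqrt eps < 1).
  { split; [apply sqrt_lt_R0, He0 |]. rewrite <- sqrt_1. apply sqrt_lt_1; lra. }
  assert (His : 1 < / sqrt eps) by (rewrite <- Rinv_1; apply Rinv_lt_contravar; lra).
  assert (Hln : 1 <= ln (/ eps)).
  { rewrite <- (ln_exp 1). apply ln_le; [apply exp_pos |].
    pose proof exp_le_3. apply Rle_trans with 3; [lra |].
    replace 3 with (/ / 3) by field. apply Rinv_le_contravar; lra. }
  rewrite !mult_INR, pow_1. simpl (INR 3).
  assert (INR M * INR L <= (2 * / sqrt eps) * (3 * ln (/ eps))).
  { apply Rmult_le_compat; [apply pos_INR | apply pos_INR | lra | lra]. }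
  nra.
Qed.

Theorem theorem6 :
  exists (C1 C2 eps0 : R) (k : nat), 0 < eps0 /\
    forall eps, 0 < eps < eps0 ->
      exists (A : algorithm) (n : nat),
        INR n <= C1 * / sqrt eps * (ln (/ eps)) ^ k /\
        learns_with A n (C2 * eps).
Proof.
  exists 18, 1, (/ 3), 1%nat. split; [lra |].
  intros eps Heps.
  assert (Hs : 0 < / sqrt eps) by (apply Rinv_0_lt_compat, sqrt_lt_R0; lra).
  assert (Hln : 0 < ln (/ eps)).
  { rewrite <- ln_1. apply ln_increasing; [lra |].
    rewrite <- Rinv_1. apply Rinv_lt_contravar; lra. }
  destruct (nat_in_window (/ sqrt eps) ltac:(lra)) as [M HM].
  destruct (nat_in_window (2 * ln (/ eps)) ltac:(lra)) as [L HL].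
  exists (learner (2 * M) (/ INR M) L), (3 * M * L)%nat. split.
  - apply query_count; lra.
  - rewrite Rmult_1_l. apply learner_correct; [apply (INR_lt 0); simpl; lra ..| lra | |].
    + apply step_condition; lra.
    + apply depth_condition; lra.
Qed.
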